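(* Let $T$ be a first-order $\mathscr L$-theory and $A$ an existentially closed model of $T$. Then for every finite tuple of variables $\bar x$ and every finite $a$-type $\pi$ of $A[\bar x]$, $tp_a^A(\pi(A))=\sqrt[T]{\pi}$ (the strong $T$-radical of $\pi$).
   Context: $A$ is an existentially closed model of $T$ if every embedding of $A$ into a model of $T$ reflects existential sentences with parameters from $A$. $T_\forall$ is the set of consequences of $T$ of the form $\forall\bar y(\bigwedge\Phi\to\bigvee\Psi)$, $\Phi,\Psi$ finite sets of atomic formulas. $A[\bar x]$ is the $\mathscr L(A)$-structure freely generated over $A$ by $\bar x$ (quotient by the atomic diagram $D^+A$ of the term algebra of $\mathscr L\sqcup A\sqcup\bar x$), with canonical homomorphism $A\to A[\bar x]$; an $a$-type of $A[\bar x]$ is a set of atomic $\mathscr L(A)$-formulas in $\bar x$. An $a$-type $\pi$ of $A[\bar x]$ is closed if it contains every atomic formula implied by $D^+(A[\bar x])\cup\pi$; the quotient $A[\bar x]/\pi$ identifies two terms, and makes a relation hold, exactly when the corresponding atomic formula is so implied. $\pi$ is strongly $T$-prime if it is closed, $A[\bar x]/\pi\models T_\forall$, and the composite $A\to A[\bar x]\to A[\bar x]/\pi$ is an embedding. The strong radical $\sqrt[T]{\pi}$ is the intersection of all strongly $T$-prime $a$-types containing $\pi$. $\pi(A)=\{\bar a\in A^{|\bar x|}:A\models\bigwedge\pi(\bar a)\}$; for $S\subseteq A^{|\bar x|}$, $tp_a^A(S)$ is the set of atomic $\mathscr L(A)$-formulas $\phi(\bar x)$ with $A\models\phi(\bar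 a)$ for all $\bar a\in S$. *)

From mathcomp Require Import ssreflect ssrfun ssrbool eqtype ssrnat seq fintype.
From Stdlib Require Import ClassicalEpsilon.
From Stdlib Require List.

Set Implicit Arguments.
Unset Strict Implicit.
Unset Printing Implicit Defensive.

Record Lang := {
  fsym : Type;
  fari : fsym -> nat;
  rsym : Type;               (* relation symbols (equality is built in) *)
  rari : rsym -> nat }.

Section Syntax.
Variable L : Lang.

Inductive term (V : Type) : Type :=
  | tvar : V -> term V
  | tapp : forall f : fsym L, ('I_(fari f) -> term V) -> term V.

Inductive atom (V : Type) : Type :=
  | AEq : term V -> term V -> atom V
  | ARel : forall r : rsym L, ('I_(rari r) -> term V) -> atom V.

Inductive formula : Type :=
  | FAtom : atom nat -> formula
  | FFalse : formula
  | FNot : formula -> formula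
  | FAnd : formula -> formula -> formula
  | FOr : formula -> formula -> formula
  | FImp : formula -> formula -> formula
  | FAll : nat -> formula -> formula
  | FEx : nat -> formula -> formula.

Fixpoint qf (phi : formula) : Prop :=
  match phi with
  | FAtom _ | FFalse => True
  | FNot p => qf p
  | FAnd p q | FOr p q | FImp p q => qf p /\ qf q
  | FAll _ _ | FEx _ _ => False
  end.

Inductive existential : formula -> Prop :=
  | ex_qf phi : qf phi -> existential phi
  | ex_ex x phi : existential phi -> existential (FEx x phi).

End Syntax.

Arguments tvar {L V}.
Arguments FAtom {L}.

Record structure (L : Lang) := {
  carrier :> Type;
  funs : forall f : fsym L, ('I_(fari f) -> carrier) -> carrier;
  rels : forall r : rsym L, ('I_(rari r) -> carrier) -> Prop }.

Section Semantics.
Variables (L : Lang) (M : structure L).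

Fixpoint teval (V : Type) (v : V -> M) (t : term L V) : M :=
  match t with
  | tvar x => v x
  | tapp f ts => @funs L M f (fun i => teval v (ts i))
  end.

Definition asat (V : Type) (v : V -> M) (a : atom L V) : Prop :=
  match a with
  | AEq t s => teval v t = teval v s
  | ARel r ts => @rels L M r (fun i => teval v (ts i))
  end.

Definition upd (rho : nat -> M) (x : nat) (m : M) : nat -> M :=
  fun y => if y == x then m else rho y.

Fixpoint sat (rho : nat -> M) (phi : formula L) : Prop :=
  match phi with
  | FAtom a => asat rho a
  | FFalse => False
  | FNot p => ~ sat rho p
  | FAnd p q => sat rho p /\ sat rho q
  | FOr p q => sat rho p \/ sat rho q
  | FImp p q => sat rho p -> sat rho q
  | FAll x p => forall m : M, sat (upd rho x m) p
  | FEx x p => exists m : M, sat (upd rho x m) p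
  end.

End Semantics.

(* a theory is a set of formulas (sentences); a model of T is a
   (nonempty) structure satisfying every member of T (under every
   assignment, i.e. its universal closure). *)
Definition theory (L : Lang) := formula L -> Prop.

Definition model_of (L : Lang) (T : theory L) (M : structure L) : Prop :=
  inhabited M /\ forall phi, T phi -> forall rho : nat -> M, sat rho phi.

Definition embedding (L : Lang) (M N : structure L) (h : M -> N) : Prop :=
  injective h /\
  (forall f (ms : 'I_(fari f) -> M), h (@funs L M f ms) = @funs L N f (h \o ms)) /\
  (forall r (ms : 'I_(rari r) -> M), @rels L M r ms <-> @rels L N r (h \o ms)).

(* h reflects existential sentences with parameters from M: the
   parameters are given by the assignment rho. *)
Definition reflects_existential (L : Lang) (M N : structure L) (h : M -> N) :=
  forall (phi : formula L) (rho : nat -> M),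
    existential phi -> sat (h \o rho) phi -> sat rho phi.

Definition ec_model (L : Lang) (T : theory L) (A : structure L) : Prop :=
  model_of T A /\
  forall (B : structure L) (h : A -> B),
    model_of T B -> embedding h -> reflects_existential h.

(* A universal clause  forall y (/\ Phi -> \/ Psi)  with Phi, Psi finite
   lists of atomic formulas (variables nat). *)
Definition clause_holds (L : Lang) (M : structure L) (Phi Psi : seq (atom L nat)) :=
  forall rho : nat -> M,
    (forall a, List.In a Phi -> asat rho a) ->
    exists2 b, List.In b Psi & asat rho b.

Definition T_forall (L : Lang) (T : theory L) (Phi Psi : seq (atom L nat)) : Prop :=
  forall M : structure L, model_of T M -> clause_holds M Phi Psi.

Definition models_T_forall (L : Lang) (T : theory L) (M : structure L) : Prop :=
  forall Phi Psi, T_forall T Phi Psi -> clause_holds M Phi Psi.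

Section AType.
Variables (L : Lang) (A : structure L) (n : nat).

(* L(A)-terms / atomic L(A)-formulas in the variables x_0..x_{n-1}:
   variables inl a are the constants naming a : A, inr i is x_i. *)
Definition Vars := (carrier A + 'I_n)%type.
Definition aterm := term L Vars.
Definition aformula := atom L Vars.

Definition atype := aformula -> Prop.

(* the positive atomic diagram D+A, as a condition on a valuation of the
   constants naming elements of A *)
Definition sat_diagram (B : structure L) (v : Vars -> B) : Prop :=
  forall phi : atom L (carrier A),
    asat (@id (carrier A)) phi ->
    asat (fun a => v (inl a)) phi.

(* phi is implied by D+(A[x]) \cup pi, i.e. by D+A \cup pi *)
Definition implied (pi : atype) (phi : aformula) : Prop :=
  forall (B : structure L) (v : Vars -> B),
    sat_diagram v -> (forall psi, pi psi -> asat v psi) -> asat v phi.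

Definition closed_atype (pi : atype) : Prop :=
  forall phi, implied pi phi -> pi phi.

(* the quotient A[x]/pi: classes of terms modulo implied equality *)
Definition qeq (pi : atype) (t s : aterm) : Prop := implied pi (AEq t s).

Definition qcarrier (pi : atype) : Type :=
  { P : aterm -> Prop | exists t, P = qeq pi t }.

Definition qclass (pi : atype) (t : aterm) : qcarrier pi :=
  exist _ (qeq pi t) (ex_intro _ t erefl).

Definition qrep (pi : atype) (c : qcarrier pi) : aterm :=
  proj1_sig (constructive_indefinite_description _ (proj2_sig c)).

Definition quotient (pi : atype) : structure L := {|
  carrier := qcarrier pi;
  funs := fun f cs => qclass pi (@tapp L Vars f (fun i => qrep (cs i)));
  rels := fun r cs => implied pi (@ARel L Vars r (fun i => qrep (cs i))) |}.

(* the composite A -> A[x] -> A[x]/pi *)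
Definition qmap (pi : atype) (a : A) : quotient pi := qclass pi (tvar (inl a)).

Definition strongly_prime (T : theory L) (pi : atype) : Prop :=
  closed_atype pi /\ models_T_forall T (quotient pi) /\ embedding (@qmap pi).

Definition strong_radical (T : theory L) (pi : atype) : atype :=
  fun phi => forall p : atype,
    (forall psi, pi psi -> p psi) -> strongly_prime T p -> p phi.

Definition aval (abar : 'I_n -> A) : Vars -> A :=
  fun v => match v with inl a => a | inr i => abar i end.

Definition realizations (pi : atype) : ('I_n -> A) -> Prop :=
  fun abar => forall phi, pi phi -> asat (aval abar) phi.

Definition tp_a (S : ('I_n -> A) -> Prop) : atype :=
  fun phi => forall abar, S abar -> asat (aval abar) phi.

End AType.

(* Each realization [abar] of [pi] in [A] gives the strongly T-prime type
   [tp_of abar], since [A[x]] modulo it embeds into [A]; so the radical lies in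
   [tp_a (pi(A))].  Conversely, let [p] be strongly T-prime containing [pi] and
   [phi] hold on [pi(A)].  Consider the atomic diagram of [A] together with [pi]
   and [~ phi].  If it has a model of [T], that model extends [A], and since [A]
   is existentially closed the finitely many literals of [pi] and [~ phi] are
   realized in [A], a contradiction.  Otherwise, by compactness (via ultraproducts
   and Łoś's theorem), some finite part of it is inconsistent with [T], that is,
   a clause of [T_forall].  It holds in [A[x]/p], which contains [A]; evaluated at
   the generic point it forces [phi] into [p]. *)

From mathcomp Require Import ssreflect ssrfun ssrbool eqtype ssrnat seq fintype.
From Stdlib Require List.
From Stdlib Require Import Classical ClassicalEpsilon FunctionalExtensionality.
From Stdlib Require Import PropExtensionality ProofIrrelevance.
From mathcomp Require Import classical_sets filter.

Set Implicit Arguments.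
Unset Strict Implicit.
Unset Printing Implicit Defensive.

Lemma In_enum (T : finType) (x : T) : List.In x (enum T).
Proof.
have : x \in enum T by rewrite mem_enum.
elim: (enum T) => //= y s IH; rewrite in_cons => /orP [/eqP ->|/IH]; by [left|right].
Qed.

Section Syntax.
Variable L : Lang.

Fixpoint map_term V W (f : V -> W) (t : term L V) : term L W :=
  match t with
  | tvar x => tvar (f x)
  | tapp g ts => tapp (fun j => map_term f (ts j))
  end.

Definition map_atom V W (f : V -> W) (a : atom L V) : atom L W :=
  match a with
  | AEq t s => AEq (map_term f t) (map_term f s)
  | ARel r ts => @ARel L W r (fun j => map_term f (ts j))
  end.

Lemma teval_map (M : structure L) V W (f : V -> W) (rho : W -> M) t :
  teval rho (map_term f t) = teval (rho \o f) t.
Proof.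
elim: t => [x|g ts IH] //=.
by congr (funs _); apply: functional_extensionality => j; exact: IH.
Qed.

Lemma asat_map (M : structure L) V W (f : V -> W) (rho : W -> M) a :
  asat rho (map_atom f a) <-> asat (rho \o f) a.
Proof.
case: a => [t s|r ts] /=; first by rewrite !teval_map.
have -> // : (fun j => teval rho (map_term f (ts j))) =
             (fun j => teval (rho \o f) (ts j)).
by apply: functional_extensionality => j; exact: teval_map.
Qed.

Definition lit V := (bool * atom L V)%type.

Definition lsat (M : structure L) V (v : V -> M) (s : lit V) : Prop :=
  if s.1 then asat v s.2 else ~ asat v s.2.

Definition satisfiable (T : theory L) V (S : lit V -> Prop) : Prop :=
  exists (B : structure L) (v : V -> B), model_of T B /\ forall s, S s -> lsat v s.

Definition map_lit V W (f : V -> W) (s : lit V) : lit W := (s.1, map_atom f s.2).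

Lemma lsat_map (M : structure L) V W (f : V -> W) (rho : W -> M) s :
  lsat rho (map_lit f s) <-> lsat (rho \o f) s.
Proof. by case: s => [[] a]; rewrite /lsat /= asat_map. Qed.

Section Embeddings.
Variables (M N : structure L) (h : M -> N).

Lemma teval_embedding V (rho : V -> M) t :
  embedding h -> teval (h \o rho) t = h (teval rho t).
Proof.
move=> [_ [h_funs _]]; elim: t => [x|g ts IH] //=.
by rewrite h_funs; congr (funs _); apply: functional_extensionality => j; exact: IH.
Qed.

Lemma asat_embedding V (rho : V -> M) a :
  embedding h -> asat (h \o rho) a <-> asat rho a.
Proof.
move=> hE; case: a => [t s|r ts] /=.
  by rewrite !teval_embedding //; split => [/(proj1 hE)|->].
have -> : (fun j => teval (h \o rho) (ts j)) = h \o (fun j => teval rho (ts j)).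
  by apply: functional_extensionality => j; exact: teval_embedding.
by split => /(proj2 (proj2 hE)).
Qed.

Lemma clause_holds_embedding Phi Psi :
  embedding h -> clause_holds N Phi Psi -> clause_holds M Phi Psi.
Proof.
move=> hE HN rho HPhi.
have HPhi' a : List.In a Phi -> asat (h \o rho) a.
  by move=> /HPhi /(asat_embedding rho a hE).
by have [b Hb /(asat_embedding rho b hE)] := HN _ HPhi'; exists b.
Qed.

Lemma embedding_of_atoms :
  (forall a : atom L M, asat h a <-> asat id a) -> embedding h.
Proof.
move=> hA; split; [|split].
- by move=> x y /(hA (AEq (tvar x) (tvar y))).
- by move=> f ms; apply/(hA (AEq (tvar (funs ms)) (tapp (fun j => tvar (ms j))))).
- by move=> r ms; exact: iff_sym (hA (@ARel L M r (fun j => tvar (ms j)))).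
Qed.

End Embeddings.

Lemma embedding_cancel (M N : structure L) (f : M -> N) (g : N -> M) :
  embedding g -> cancel f g -> embedding f.
Proof.
move=> [g_inj [g_funs g_rels]] fK; split; [|split].
- exact: can_inj fK.
- move=> h ms; apply: g_inj; rewrite g_funs fK; congr (funs _).
  by apply: functional_extensionality => j /=; rewrite fK.
- move=> r ms; rewrite g_rels.
  have -> // : g \o (f \o ms) = ms.
  by apply: functional_extensionality => j /=; rewrite fK.
Qed.

Section Params.
Variables (X Y : Type).

Fixpoint term_params (t : term L (X + Y)) : seq X :=
  match t with
  | tvar (inl c) => [:: c]
  | tvar (inr _) => [::]
  | tapp g ts => List.flat_map (fun j => term_params (ts j)) (enum 'I_(fari g))
  end.

Definition atom_params (a : atom L (X + Y)) : seq X :=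
  match a with
  | AEq t s => (term_params t ++ term_params s)%list
  | ARel r ts => List.flat_map (fun j => term_params (ts j)) (enum 'I_(rari r))
  end.

Lemma teval_params (M : structure L) (v w : X + Y -> M) t :
  (forall y, v (inr y) = w (inr y)) ->
  (forall c, List.In c (term_params t) -> v (inl c) = w (inl c)) ->
  teval v t = teval w t.
Proof.
move=> vw_var; elim: t => [[c|y]|g ts IH] /= vw_par.
- by apply: vw_par; left.
- exact: vw_var.
- congr (funs _); apply: functional_extensionality => j; apply: IH => c Hc.
  by apply: vw_par; apply/List.in_flat_map; exists j; split => //; exact: In_enum.
Qed.

Lemma asat_params (M : structure L) (v w : X + Y -> M) a :
  (forall y, v (inr y) = w (inr y)) ->
  (forall c, List.In c (atom_params a) -> v (inl c) = w (inl c)) ->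
  asat v a <-> asat w a.
Proof.
move=> vw_var; case: a => [t s|r ts] /= vw_par.
  by rewrite (@teval_params _ v w t) ?(@teval_params _ v w s) // => c Hc;
    apply: vw_par; apply: List.in_or_app; [right|left].
have -> // : (fun j => teval v (ts j)) = (fun j => teval w (ts j)).
apply: functional_extensionality => j; apply: teval_params => // c Hc.
by apply: vw_par; apply/List.in_flat_map; exists j; split => //; exact: In_enum.
Qed.

End Params.
End Syntax.

Arguments lit : clear implicits.

(* The quotient [A[x]/pi] of the definitions is an instance: [qcarrier pi],
   [qclass pi] and [qrep] are [classes], [class_of] and [class_rep] for [qeq pi]. *)
Section Classes.
Variables (X : Type) (R : X -> X -> Prop).

Definition classes := {P : X -> Prop | exists x, P = R x}.

Definition class_of (x : X) : classes := exist _ (R x) (ex_intro _ x erefl).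

Definition class_rep (c : classes) : X :=
  proj1_sig (constructive_indefinite_description _ (proj2_sig c)).

Lemma class_of_rep c : class_of (class_rep c) = c.
Proof.
case: c => [P HP]; rewrite /class_rep /=.
case: (constructive_indefinite_description _ HP) => x /= Ex; subst P.
by rewrite /class_of (proof_irrelevance _ HP (ex_intro _ x erefl)).
Qed.

Hypotheses (R_refl : forall x, R x x) (R_sym : forall x y, R x y -> R y x)
  (R_trans : forall x y z, R x y -> R y z -> R x z).

Lemma eq_class_of x y : class_of x = class_of y <-> R x y.
Proof.
split => [/(f_equal sval) /= ->|Rxy]; first exact: R_refl.
have E : R x = R y.
  apply: functional_extensionality => z; apply: propositional_extensionality.
  by split => H; [apply: R_trans (R_sym Rxy) H | apply: R_trans Rxy H].
rewrite /class_of; move: (ex_intro _ x _) (ex_intro _ y _); rewrite E => p q.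
by rewrite (proof_irrelevance _ p q).
Qed.

Lemma class_rep_of x : R (class_rep (class_of x)) x.
Proof. by apply/eq_class_of; rewrite class_of_rep. Qed.

End Classes.

Section Ultraproduct.
Variables (L : Lang) (I : Type) (F : set_system I) (M : I -> structure L).
Context {F_ultra : UltraFilter F}.

(* Relations are taken to hold [F]-almost everywhere, as the ultraproduct
   inherits them. *)
Definition product : structure L := {|
  carrier := forall i, M i;
  funs := fun g ms i => @funs L (M i) g (fun j => ms j i);
  rels := fun r ms => F (fun i => @rels L (M i) r (fun j => ms j i)) |}.

Lemma teval_product V (g : V -> product) t i :
  teval g t i = teval (fun x => g x i) t.
Proof.
elim: t => [x|f ts IH] //=.
by congr (funs _); apply: functional_extensionality => j; exact: IH.
Qed.

Lemma upd_product (g : nat -> product) x (h : product) i :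
  (fun y => upd g x h y i) = upd (fun y => g y i) x (h i).
Proof. by apply: functional_extensionality => y; rewrite /upd; case: eqP. Qed.

Definition ueq (f g : product) : Prop := F (fun i => f i = g i).

Lemma ueq_classP f g : class_of ueq f = class_of ueq g <-> ueq f g.
Proof.
apply: eq_class_of => [h|h h' H|h h' h'' H H'].
- exact: filterE.
- by apply: filterS H => i ->.
- by apply: filterS (filterI H H') => i [-> ->].
Qed.

Lemma ueq_rep f : ueq (class_rep (class_of ueq f)) f.
Proof. by apply/ueq_classP; rewrite class_of_rep. Qed.

Definition ultraproduct : structure L := {|
  carrier := classes ueq;
  funs := fun g cs => class_of ueq (@funs L product g (fun j => class_rep (cs j)));
  rels := fun r cs => @rels L product r (fun j => class_rep (cs j)) |}.

Lemma filter_iff (W P Q : set I) :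
  F W -> (forall i, W i -> (P i <-> Q i)) -> (F P <-> F Q).
Proof.
move=> FW PQ; split => FPQ; apply: filterS (filterI FW FPQ) => i [/PQ E];
  [exact: E.1 | exact: E.2].
Qed.

Lemma ultra_not (P : set I) : F (fun i => ~ P i) <-> ~ F P.
Proof.
split => [FnP FP|nFP]; first by have [i []] := filter_ex (filterI FP FnP).
by case: (in_ultra_setVsetC P F_ultra).
Qed.

Lemma teval_ultraproduct V (g : V -> product) t :
  teval (fun x => class_of ueq (g x) : ultraproduct) t = class_of ueq (teval g t).
Proof.
elim: t => [x|f ts IH] //=; apply/ueq_classP.
apply: filterS (filter_forall _ (fun j => ueq_rep (teval g (ts j)))) => i Hi /=.
by congr (funs _); apply: functional_extensionality => j; rewrite IH; exact: Hi.
Qed.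

Lemma asat_ultraproduct V (g : V -> product) a :
  asat (fun x => class_of ueq (g x) : ultraproduct) a <->
  F (fun i => asat (fun x => g x i) a).
Proof.
case: a => [t s|r ts] /=.
  rewrite !teval_ultraproduct ueq_classP.
  by apply: filter_iff (filterT) _ => i _; rewrite !teval_product.
apply: filter_iff (filter_forall _ (fun j => ueq_rep (teval g (ts j)))) _ => i Hi.
have -> // : (fun j => class_rep (teval (fun x => class_of ueq (g x) : ultraproduct)
                                        (ts j)) i) =
             (fun j => teval (fun x => g x i) (ts j)).
by apply: functional_extensionality => j; rewrite teval_ultraproduct Hi teval_product.
Qed.

Lemma lsat_ultraproduct V (g : V -> product) s :
  lsat (fun x => class_of ueq (g x) : ultraproduct) s <->
  F (fun i => lsat (fun x => g x i) s).
Proof. by case: s => [[] a]; rewrite /lsat /= asat_ultraproduct ?ultra_not. Qed.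

Hypothesis M_inh : forall i, inhabited (M i).

Lemma upd_ultraproduct (g : nat -> product) x h :
  upd (fun y => class_of ueq (g y) : ultraproduct) x (class_of ueq h) =
  (fun y => class_of ueq (upd g x h y)).
Proof. by apply: functional_extensionality => y; rewrite /upd; case: eqP. Qed.

Lemma forall_epsilon i (P : M i -> Prop) :
  (forall m, P m) <-> P (epsilon (M_inh i) (fun m => ~ P m)).
Proof.
split => [|HP m]; first exact.
apply: NNPP => nPm; apply: (epsilon_spec (M_inh i) (fun m => ~ P m)) HP.
by exists m.
Qed.

Theorem sat_ultraproduct phi (g : nat -> product) :
  sat (fun x => class_of ueq (g x) : ultraproduct) phi <->
  F (fun i => sat (fun x => g x i) phi).
Proof.
elim: phi g => [a||p IHp|p IHp q IHq|p IHp q IHq|p IHp q IHq|x p IHp|x p IHp] g /=.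
- exact: asat_ultraproduct.
- by split => // /filter_ex [].
- by rewrite IHp ultra_not.
- rewrite IHp IHq; split => [[Fp Fq]|Fpq]; first exact: filterI Fp Fq.
  by split; apply: filterS Fpq => i [].
- rewrite IHp IHq; split => [[Fp|Fq]|Fpq];
    [by apply: filterS Fp => i; left | by apply: filterS Fq => i; right |].
  case: (in_ultra_setVsetC (fun i => sat (fun y => g y i) p) F_ultra) => Fp.
    by left.
  by right; apply: filterS (filterI Fpq Fp) => i [[]].
- rewrite IHp IHq; split => [Fpq|Fpq Fp]; last by apply: filterS (filterI Fpq Fp) => i [].
  case: (in_ultra_setVsetC (fun i => sat (fun y => g y i) p) F_ultra) => Fp.
    by apply: filterS (Fpq Fp) => i Hq _.
  by apply: filterS Fp => i Hnp Hp.
- split => [Hall|Fall m].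
    pose h i := epsilon (M_inh i) (fun m => ~ sat (upd (fun y => g y i) x m) p).
    have := Hall (class_of ueq h); rewrite upd_ultraproduct IHp.
    by apply: filterS => i; rewrite upd_product => Hh; apply/forall_epsilon.
  rewrite -(class_of_rep m) upd_ultraproduct IHp.
  by apply: filterS Fall => i Hi; rewrite upd_product.
- split => [[m]|Fex].
    rewrite -(class_of_rep m) upd_ultraproduct IHp.
    by apply: filterS => i; rewrite upd_product; exists (class_rep m i).
  pose h i := epsilon (M_inh i) (fun m => sat (upd (fun y => g y i) x m) p).
  exists (class_of ueq h); rewrite upd_ultraproduct IHp.
  apply: filterS Fex => i Hi; rewrite upd_product.
  exact: (epsilon_spec (M_inh i) (fun m => sat (upd (fun y => g y i) x m) p)).
Qed.

End Ultraproduct.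

Lemma model_of_ultraproduct (L : Lang) (T : theory L) (I : Type) (F : set_system I)
    (M : I -> structure L) {F_ultra : UltraFilter F} :
  (forall i, model_of T (M i)) -> model_of T (ultraproduct F M).
Proof.
move=> M_model; have M_inh i := (M_model i).1; split.
  by constructor; exact: class_of (fun i => epsilon (M_inh i) (fun _ => True)).
move=> phi Tphi rho.
have -> : rho = (fun x => class_of (@ueq L I F M) (class_rep (rho x))).
  by apply: functional_extensionality => x; rewrite class_of_rep.
by apply/(sat_ultraproduct M_inh); apply: filterE => i; exact: (M_model i).2.
Qed.

Section Compactness.
Variables (L : Lang) (T : theory L) (V : Type) (S : lit L V -> Prop).
Hypothesis S_finsat : forall l : seq (lit L V),
  (forall s, List.In s l -> S s) -> satisfiable T (fun s => List.In s l).

Theorem compactness : satisfiable T S.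
Proof.
pose D : set (seq (lit L V)) := fun l => forall s, List.In s l -> S s.
pose I := {l | D l}.
have /choice [Mv Mv_spec] : forall i : I, exists Bv : {B : structure L & V -> B},
    model_of T (projT1 Bv) /\ forall s, List.In s (sval i) -> lsat (projT2 Bv) s.
  by move=> i; have [B [v Hv]] := S_finsat (svalP i); exists (existT _ B v).
pose cone l : set I := fun i => forall s, List.In s l -> List.In s (sval i).
have cone_proper : ProperFilter (filter_from D cone).
  apply: filter_from_proper => [|l Dl]; last by exists (exist _ l Dl).
  apply: filter_from_filter => [|l1 l2 D1 D2]; first by exists [::].
  exists (l1 ++ l2)%list => [s Hs|i Hi].
    by case: (List.in_app_or _ _ _ Hs); [exact: D1 | exact: D2].
  by split => s Hs; apply: Hi; apply: List.in_or_app; [left|right].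
have [U [U_ultra cone_U]] := ultraFilterLemma cone_proper.
exists (ultraproduct U (fun i => projT1 (Mv i))).
exists (fun x => class_of (@ueq L I U _) (fun i => projT2 (Mv i) x)); split.
  by apply: model_of_ultraproduct => i; exact: (Mv_spec i).1.
move=> s Ss; apply/lsat_ultraproduct.
apply: filterS (cone_U (cone [:: s]) _) => [i Hi|].
  by apply: (Mv_spec i).2; apply: Hi; left.
by exists [:: s] => // s' [<-|[]].
Qed.

End Compactness.

Section Formulas.
Variable L : Lang.

Fixpoint exs (k : nat) (phi : formula L) : formula L :=
  match k with 0 => phi | k.+1 => FEx k (exs k phi) end.

Lemma existential_exs k phi : qf phi -> existential (exs k phi).
Proof. by move=> qf_phi; elim: k => [|k IH] /=; [exact: ex_qf | exact: ex_ex]. Qed.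

Lemma sat_exs (M : structure L) k phi (rho : nat -> M) :
  sat rho (exs k phi) <-> exists2 w, (forall y, k <= y -> w y = rho y) & sat w phi.
Proof.
elim: k rho => [|k IH] rho /=.
  split => [H|[w w_rho]]; first by exists rho.
  by have -> : rho = w by apply: functional_extensionality => y; rewrite w_rho.
split => [[m /IH [w w_rho Hw]]|[w w_rho Hw]].
  exists w => // y lt_ky; rewrite w_rho ?(ltnW lt_ky) // /upd.
  by case: eqP => // E; move: lt_ky; rewrite E ltnn.
exists (w k); apply/IH; exists w => // y Hy; rewrite /upd.
by case: eqP => [->|/eqP ne] //; apply: w_rho; rewrite ltn_neqAle eq_sym ne.
Qed.

Definition lit_formula (s : lit L nat) : formula L :=
  if s.1 then FAtom s.2 else FNot (FAtom s.2).

Definition lits_formula (l : seq (lit L nat)) : formula L :=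
  foldr (fun s f => FAnd (lit_formula s) f) (FNot (FFalse L)) l.

Lemma qf_lits_formula l : qf (lits_formula l).
Proof. by elim: l => [|[[] a] l IH] //=. Qed.

Lemma sat_lits_formula (M : structure L) (rho : nat -> M) l :
  sat rho (lits_formula l) <-> forall s, List.In s l -> lsat rho s.
Proof.
elim: l => [|s l IH] /=; first by split => // _ [].
have sat_s : sat rho (lit_formula s) <-> lsat rho s by case: s => [[] a].
rewrite IH sat_s; split => [[Hs Hl] s' [<-|/Hl] //|H].
by split => [|s' ls']; apply: H; [left|right].
Qed.

Definition lits_pos (l : seq (lit L nat)) := List.map snd (List.filter fst l).
Definition lits_neg (l : seq (lit L nat)) :=
  List.map snd (List.filter (fun s => ~~ s.1) l).

Lemma clause_holds_lits (M : structure L) l :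
  clause_holds M (lits_pos l) (lits_neg l) <->
  forall rho : nat -> M, ~ forall s, List.In s l -> lsat rho s.
Proof.
split => [Hcl rho Hl|Hunsat rho Hpos].
  have pos_l a : List.In a (lits_pos l) -> asat rho a.
    move=> /List.in_map_iff [[b a'] [/= <- /List.filter_In [ls /= b_true]]].
    by move: (Hl _ ls); rewrite /lsat /= b_true.
  have [a /List.in_map_iff [[b a'] [/= <- /List.filter_In [ls /= b_false]]] Ha] :=
    Hcl rho pos_l.
  by move: (Hl _ ls); rewrite /lsat /= (negbTE b_false).
apply: NNPP => no_neg; apply: (Hunsat rho) => [[[] a]] ls; rewrite /lsat /=.
  apply: Hpos; apply/List.in_map_iff.
  by exists (true, a); split => //; apply/List.filter_In.
move=> Ha; apply: no_neg; exists a => //.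
by apply/List.in_map_iff; exists (false, a); split => //; apply/List.filter_In.
Qed.

End Formulas.

Section Encoding.
Variables (L : Lang) (X : Type) (n : nat).

Fixpoint index_of (cs : seq X) (c : X) : nat :=
  match cs with
  | [::] => 0
  | c' :: cs => if excluded_middle_informative (c = c') then 0 else (index_of cs c).+1
  end.

Lemma nth_index_of c0 cs c : List.In c cs -> nth c0 cs (index_of cs c) = c.
Proof.
elim: cs => //= c' cs IH Hc; case: excluded_middle_informative => [E|ne] //=.
by case: Hc => [E|/IH]; first by case: ne.
Qed.

Definition lits_params (l : seq (lit L (X + 'I_n))) : seq X :=
  List.flat_map (fun s => atom_params s.2) l.

Definition encode (cs : seq X) (x : X + 'I_n) : nat :=
  match x with inl c => n + index_of cs c | inr i => i end.

Definition extend (M : Type) (b : 'I_n -> M) (d : nat -> M) (y : nat) : M :=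
  if (insub y : option 'I_n) is Some i then b i else d (y - n).

Lemma extend_ord M b d (i : 'I_n) : @extend M b d i = b i.
Proof. by rewrite /extend valK. Qed.

Lemma extend_ge M b d y : n <= y -> @extend M b d y = d (y - n).
Proof. by move=> le_ny; rewrite /extend insubN // -leqNgt. Qed.

Definition encode_lits (l : seq (lit L (X + 'I_n))) : seq (lit L nat) :=
  List.map (map_lit (encode (lits_params l))) l.

Lemma lsat_encode (M : structure L) (w : nat -> M) (v : X + 'I_n -> M) l :
  (forall i : 'I_n, w i = v (inr i)) ->
  (forall c, List.In c (lits_params l) ->
     w (n + index_of (lits_params l) c) = v (inl c)) ->
  (forall s, List.In s (encode_lits l) -> lsat w s) <->
  (forall s, List.In s l -> lsat v s).
Proof.
move=> wv_var wv_par.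
have E s : List.In s l -> lsat w (map_lit (encode (lits_params l)) s) <-> lsat v s.
  move=> ls; rewrite lsat_map; case: s ls => b a ls; rewrite /lsat /=.
  suff E : asat (w \o encode (lits_params l)) a <-> asat v a by case: b {ls}; rewrite E.
  apply: asat_params => [i|c Hc] //=; apply: wv_par.
  by apply/List.in_flat_map; exists (b, a).
split => H s ls; first by apply/E => //; apply: H; exact: List.in_map.
by have [s' [<- ls']] := proj1 (List.in_map_iff _ _ _) ls; apply/E => //; exact: H.
Qed.

Lemma lsat_encode_extend (M : structure L) (v : X + 'I_n -> M) (c0 : X) l :
  (forall s, List.In s (encode_lits l) ->
     lsat (extend (v \o inr) (fun k => v (inl (nth c0 (lits_params l) k)))) s) <->
  (forall s, List.In s l -> lsat v s).
Proof.
apply: lsat_encode => [i|c Hc]; first exact: extend_ord.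
by rewrite extend_ge ?leq_addr // addKn nth_index_of.
Qed.

End Encoding.

Section Quotient.
Variables (L : Lang) (A : structure L) (n : nat) (pi : atype A n).

Lemma implied_mem phi : pi phi -> implied pi phi.
Proof. by move=> pi_phi B v _; apply. Qed.

Lemma qclassP t s : qclass pi t = qclass pi s <-> implied pi (AEq t s).
Proof.
apply: (@eq_class_of _ (qeq pi)) => [t'|t1 t2 E|t1 t2 t3 E E'] B v Hd Hp //=.
- by rewrite (E B v Hd Hp).
- by rewrite (E B v Hd Hp) (E' B v Hd Hp).
Qed.

Lemma teval_qrep t (B : structure L) (v : Vars A n -> B) :
  sat_diagram v -> (forall psi, pi psi -> asat v psi) ->
  teval v (qrep (qclass pi t)) = teval v t.
Proof.
have : implied pi (AEq (qrep (qclass pi t)) t) by apply/qclassP; exact: class_of_rep.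
by move=> E Hd Hp; exact: E B v Hd Hp.
Qed.

Definition generic (x : Vars A n) : quotient pi := qclass pi (tvar x).

Lemma teval_generic t : teval generic t = qclass pi t.
Proof.
elim: t => [x|f ts IH] //=; apply/qclassP => B v Hd Hp /=.
by congr (funs _); apply: functional_extensionality => j; rewrite IH teval_qrep.
Qed.

Lemma asat_generic a : asat generic a <-> implied pi a.
Proof.
case: a => [t s|r ts] /=; first by rewrite !teval_generic; exact: qclassP.
have E (B : structure L) (v : Vars A n -> B) :
    sat_diagram v -> (forall psi, pi psi -> asat v psi) ->
    (fun j => teval v (qrep (teval generic (ts j)))) = (fun j => teval v (ts j)).
  move=> Hd Hp; apply: functional_extensionality => j.
  by rewrite teval_generic teval_qrep.
by split => H B v Hd Hp; move: (H B v Hd Hp); rewrite /= (E B v Hd Hp).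
Qed.

End Quotient.

Section Realization.
Variables (L : Lang) (A : structure L) (n : nat) (abar : 'I_n -> A).

Definition tp_of : atype A n := fun psi => asat (aval abar) psi.

Lemma implied_tp_of psi : implied tp_of psi -> tp_of psi.
Proof. by move=> H; apply: (H A (aval abar)) => // phi. Qed.

Definition eval_tp (c : quotient tp_of) : A := teval (aval abar) (qrep c).

Lemma eval_tp_qclass t : eval_tp (qclass tp_of t) = teval (aval abar) t.
Proof. by apply: teval_qrep => // phi. Qed.

Lemma embedding_eval_tp : embedding eval_tp.
Proof.
split; [|split].
- move=> c d E; rewrite -(class_of_rep c) -(class_of_rep d).
  by apply/qclassP; apply: implied_mem.
- by move=> f cs; rewrite /= eval_tp_qclass.
- by move=> r cs; split => [/implied_tp_of|H] //; apply: implied_mem.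
Qed.

Lemma strongly_prime_tp_of (T : theory L) : model_of T A -> strongly_prime T tp_of.
Proof.
move=> HA; split; [exact: implied_tp_of | split].
- move=> Phi Psi T_clause.
  exact: clause_holds_embedding embedding_eval_tp (T_clause A HA).
- apply: embedding_cancel embedding_eval_tp _ => a; exact: eval_tp_qclass.
Qed.

End Realization.

Lemma strong_radical_sub_tp (L : Lang) (T : theory L) (A : structure L) n
    (pi : atype A n) phi :
  model_of T A -> strong_radical T pi phi -> tp_a (realizations pi) phi.
Proof.
move=> HA Hrad abar real_abar; apply: (Hrad (tp_of abar)) => //.
exact: strongly_prime_tp_of.
Qed.

Section ExistentiallyClosed.
Variables (L : Lang) (T : theory L) (A : structure L) (n : nat).

(* Pack the literals into one existential formula, the parameters from [A]
   becoming the variables [n + k]. *)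
Lemma ec_realize (l : seq (lit L (Vars A n))) (B : structure L) (v : Vars A n -> B) :
  ec_model T A -> model_of T B -> embedding (v \o inl) ->
  (forall s, List.In s l -> lsat v s) ->
  exists abar : 'I_n -> A, forall s, List.In s l -> lsat (aval abar) s.
Proof.
move=> [[[a0] _] A_ec] HB hE Hv.
pose cs := lits_params l; pose rho y := nth a0 cs (y - n).
have [w w_rho Hw] : exists2 w : nat -> A, (forall y, n <= y -> w y = rho y) &
    sat w (lits_formula (encode_lits l)).
  apply/sat_exs/(A_ec B _ HB hE _ rho (existential_exs _ (qf_lits_formula _))).
  apply/sat_exs; exists (extend (v \o inr) (fun k => v (inl (nth a0 cs k)))).
    by move=> y le_ny; rewrite extend_ge.
  exact/sat_lits_formula/lsat_encode_extend.
exists (fun i => w i); apply/(lsat_encode (w := w)) => //; last exact/sat_lits_formula.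
by move=> c Hc; rewrite w_rho ?leq_addr // /rho addKn nth_index_of.
Qed.

(* A model of these literals is an extension of [A] with a realization of [pi]
   failing [phi]. *)
Definition refutation_lits (pi : atype A n) (phi : aformula A n) (s : lit L (Vars A n)) :=
  (exists2 s0 : lit L A, lsat id s0 & s = map_lit inl s0) \/
  (s.1 /\ pi s.2) \/ s = (false, phi).

Lemma counterexample_of_satisfiable (pi : seq (aformula A n)) phi :
  ec_model T A -> satisfiable T (refutation_lits (fun a => List.In a pi) phi) ->
  exists2 abar, realizations (fun a => List.In a pi) abar & ~ asat (aval abar) phi.
Proof.
move=> A_ec [B [v [HB Hv]]].
have hE : embedding (v \o inl).
  apply: embedding_of_atoms => a; rewrite -asat_map.
  have [Ha|nHa] := classic (asat id a); split => // H.
    by apply: (Hv (map_lit inl (true, a))); left; exists (true, a).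
  by case: (Hv (map_lit inl (false, a))) => //; left; exists (false, a).
pose l := (false, phi) :: List.map (pair true) pi.
have Hl s : List.In s l -> lsat v s.
  by move=> [<-|/List.in_map_iff [a [<- pi_a]]]; apply: Hv; right; [right | left].
have [abar Habar] := ec_realize A_ec HB hE Hl.
exists abar => [a pi_a|]; last by apply: (Habar (false, phi)); left.
by apply: (Habar (true, a)); right; exact: List.in_map.
Qed.

Section Refutation.
Variables (pi : atype A n) (phi : aformula A n) (p : atype A n).
Hypotheses (p_prime : strongly_prime T p) (pi_p : forall psi, pi psi -> p psi).

Lemma lsat_generic_refutation s :
  ~ p phi -> refutation_lits pi phi s -> lsat (generic p) s.
Proof.
have [p_closed [_ p_emb]] := p_prime.
move=> nphi [[[[] a] Ha ->]|[[]|->]]; rewrite /lsat /=.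
- by apply/asat_generic => B v Hd _; apply/asat_map; exact: Hd.
- by move/asat_map => Ha'; apply: Ha; exact: (proj1 (asat_embedding id a p_emb) Ha').
- by case: s => [[] a] //= _ pi_a; apply/asat_generic; apply: implied_mem; exact: pi_p.
- by move/asat_generic/p_closed.
Qed.

(* An unsatisfiable finite set of these literals is a clause of [T_forall],
   which the generic point of [A[x]/p] can only satisfy through [phi]. *)
Lemma mem_of_unsatisfiable (l : seq (lit L (Vars A n))) :
  inhabited A -> (forall s, List.In s l -> refutation_lits pi phi s) ->
  ~ satisfiable T (fun s => List.In s l) -> p phi.
Proof.
move=> [a0] l_ref l_unsat; have [_ [p_Tforall _]] := p_prime.
have l_clause : T_forall T (lits_pos (encode_lits l)) (lits_neg (encode_lits l)).
  move=> M HM; apply/clause_holds_lits => rho Hl; apply: l_unsat.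
  exists M, (rho \o encode (lits_params l)); split => // s ls; apply/lsat_map.
  by apply: Hl; exact: List.in_map.
apply: NNPP => nphi; have /clause_holds_lits generic_unsat := p_Tforall _ _ l_clause.
apply: generic_unsat; apply/(lsat_encode_extend (generic p) a0) => s ls.
exact: lsat_generic_refutation (l_ref s ls).
Qed.

End Refutation.

Lemma tp_sub_strong_radical (pi : seq (aformula A n)) phi :
  ec_model T A -> tp_a (realizations (fun a => List.In a pi)) phi ->
  strong_radical T (fun a => List.In a pi) phi.
Proof.
move=> A_ec tp_phi; set piS := fun a => _; have [[A_inh _] _] := A_ec.
case: (classic (exists2 l, forall s, List.In s l -> refutation_lits piS phi s &
  ~ satisfiable T (fun s => List.In s l))) => [[l l_ref l_unsat]|no_refutation].
  move=> p pi_p p_prime.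
  exact: (mem_of_unsatisfiable p_prime pi_p A_inh l_ref l_unsat).
have finsat l : (forall s, List.In s l -> refutation_lits piS phi s) ->
    satisfiable T (fun s => List.In s l).
  by move=> l_ref; apply: NNPP => l_unsat; apply: no_refutation; exists l.
have [abar real_abar nphi] := counterexample_of_satisfiable A_ec (compactness finsat).
by case: nphi; exact: tp_phi.
Qed.

End ExistentiallyClosed.

Theorem theorem4p15 (L : Lang) (T : theory L) (A : structure L) :
  ec_model T A ->
  forall (n : nat) (pi : seq (aformula A n)),
    let piS : atype A n := fun phi => List.In phi pi in
    forall phi : aformula A n,
      tp_a (realizations piS) phi <-> strong_radical T piS phi.
Proof.
move=> A_ec n pi piS phi; split; first exact: tp_sub_strong_radical.
by case: A_ec => A_model _; exact: strong_radical_sub_tp.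
Qed.
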